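(* Let $\mathcal{C}$ be a quasicategory. Then $\mathrm{Ex}\,\mathcal{C}$ is a Kan complex if and only if $\mathcal{C}^\sharp$ satisfies calculus of left fractions (CLF).
   Context: $\mathrm{Ex}$ is Kan's functor: $(\mathrm{Ex}\,X)_n=\mathrm{Hom}(\mathrm{sd}\,\Delta^n, X)$ where $\mathrm{sd}\,\Delta^n$ is the nerve of the poset of non-empty subsets of $[n]=\{0,\dots,n\}$ ordered by inclusion. $\mathcal{C}^\sharp$ denotes $\mathcal{C}$ with all $1$-simplices marked. A marked simplicial set is a pair $(X,W)$ with $W\subseteq X_1$ containing the degenerate $1$-simplices. For $n\ge 0$, $0\le k\le n$, $\mathrm{L}^n_k$ is the nerve of the poset of subsets $A\subseteq[n]$ with $k\in A$ ordered by inclusion, where $A_0\subseteq A_1$ is marked iff $\max A_0=\max A_1$; $\mathrm{LJ}^n_k\subseteq \mathrm{L}^n_k$ is the maximal simplicial subset not containing the vertex $[n]$. $W$ is weakly closed under composition if every map $\Lambda^2_1\to X$ with both edges marked extends to a $2$-simplex all of whose edges are marked. A marked quasicategory $(\mathcal{C},W)$ satisfies CLF if $W$ is weakly closed under composition and $(\mathcal{C},W)$ has the right lifting property (in marked simplicial sets) against all $\mathrm{LJ}^n_k\hookrightarrow\mathrm{L}^n_k$ with $n\ge2$, $0<k\le n$. *)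

From Stdlib Require Import FunctionalExtensionality ProofIrrelevance.
From mathcomp Require Import all_boot.
Set Implicit Arguments. Unset Strict Implicit. Unset Printing Implicit Defensive.

Record dmap (m n : nat) := DMap {
  dfun :> 'I_m.+1 -> 'I_n.+1;
  dmono : forall i j : 'I_m.+1, i <= j -> dfun i <= dfun j }.

Definition did (n : nat) : dmap n n := @DMap n n (fun i => i) (fun i j h => h).
Definition dcomp l m n (g : dmap m n) (f : dmap l m) : dmap l n :=
  @DMap l n (fun i => g (f i)) (fun i j h => dmono g (dmono f h)).

Record sSet := SSet {
  sob :> nat -> Type;
  sact : forall m n, dmap m n -> sob n -> sob m;
  sact_id : forall n (x : sob n), sact (did n) x = x;
  sact_comp : forall l m n (f : dmap l m) (g : dmap m n) (x : sob n),
      sact (dcomp g f) x = sact f (sact g x) }.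
Arguments sact s {m n} f x.

Record sMap (X Y : sSet) := SMap {
  smap :> forall n, X n -> Y n;
  snat : forall m n (f : dmap m n) (x : X n), smap (sact X f x) = sact Y f (smap x) }.

Lemma sig_eqPI (A : Type) (P : A -> Prop) (a b : {x | P x}) :
  sval a = sval b -> a = b.
Proof. case: a b => [a pa] [b pb] /= E; subst; f_equal; exact: proof_irrelevance. Qed.

Lemma sMap_eq (X Y : sSet) (h h' : sMap X Y) :
  (forall n x, h n x = h' n x) -> h = h'.
Proof.
case: h h' => [h hn] [h' hn'] /= E.
have E' : h = h' by apply: functional_extensionality_dep => n;
  apply: functional_extensionality => x; exact: E.
subst; f_equal; exact: proof_irrelevance.
Qed.

Definition nerve_ob (P : Type) (le : P -> P -> Prop) (n : nat) :=
  { c : 'I_n.+1 -> P | forall i j : 'I_n.+1, i <= j -> le (c i) (c j) }.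

Definition nerve_act (P : Type) (le : P -> P -> Prop) m n (f : dmap m n)
  (c : nerve_ob le n) : nerve_ob le m :=
  exist (fun d : 'I_m.+1 -> P => forall i j : 'I_m.+1, i <= j -> le (d i) (d j))
    (fun i => sval c (f i)) (fun i j h => proj2_sig c _ _ (dmono f h)).

Definition nerve (P : Type) (le : P -> P -> Prop) : sSet.
Proof.
refine (@SSet (nerve_ob le) (@nerve_act P le) _ _).
- by move=> n c; apply: sig_eqPI.
- by move=> l m n f g c; apply: sig_eqPI.
Defined.

Definition subsSet (X : sSet) (S : forall n, X n -> Prop)
  (HS : forall m n (f : dmap m n) x, S n x -> S m (sact X f x)) : sSet.
Proof.
refine (@SSet (fun n => {x : X n | S n x})
  (fun m n f x => exist (fun y => S m y) (sact X f (sval x)) (HS m n f (sval x) (proj2_sig x))) _ _).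
- by move=> n x; apply: sig_eqPI; rewrite /= sact_id.
- by move=> l m n f g x; apply: sig_eqPI; rewrite /= sact_comp.
Defined.

Definition Delta (n : nat) : sSet := nerve (fun i j : 'I_n.+1 => i <= j).

(* Lambda^n_k : the union of the faces d_j, j <> k, of Delta^n *)
Definition hornP (n : nat) (k : 'I_n.+1) m (c : Delta n m) : Prop :=
  exists j : 'I_n.+1, j != k /\ forall i, sval c i != j.

Lemma hornP_closed n (k : 'I_n.+1) m p (f : dmap m p) (c : Delta n p) :
  hornP k c -> hornP k (sact (Delta n) f c).
Proof. by case=> j [jk H]; exists j; split => // i; apply: H. Qed.

Definition horn (n : nat) (k : 'I_n.+1) : sSet := subsSet (@hornP_closed n k).

Definition extends_horn (X : sSet) n (k : 'I_n.+1)
  (g : sMap (horn k) X) (h : sMap (Delta n) X) : Prop :=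
  forall p (y : horn k p), h p (sval y) = g p y.

Definition quasicategory (X : sSet) : Prop :=
  forall n (k : 'I_n.+1), 0 < k -> k < n ->
  forall g : sMap (horn k) X, exists h : sMap (Delta n) X, extends_horn g h.

Definition Kan_complex (X : sSet) : Prop :=
  forall n (k : 'I_n.+1), 0 < n ->
  forall g : sMap (horn k) X, exists h : sMap (Delta n) X, extends_horn g h.

Definition NE (n : nat) := { A : {set 'I_n.+1} | A != set0 }.
Definition sd (n : nat) : sSet := nerve (fun A B : NE n => sval A \subset sval B).

Definition NE_img m n (f : dmap m n) (A : NE m) : NE n :=
  exist (fun B : {set 'I_n.+1} => B != set0) (f @: sval A) (eq_ind_r (fun b => ~~ b) (proj2_sig A) (imset_eq0 f (sval A))).

Definition sd_fun m n (f : dmap m n) p (c : sd m p) : sd n p :=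
  exist (fun d : 'I_p.+1 -> NE n => forall i j : 'I_p.+1, i <= j -> sval (d i) \subset sval (d j))
    (fun i => NE_img f (sval c i))
    (fun i j h => imsetS f (proj2_sig c i j h)).

Definition sd_map m n (f : dmap m n) : sMap (sd m) (sd n).
Proof. by refine (@SMap _ _ (@sd_fun m n f) _) => p q g c; apply: sig_eqPI. Defined.

Definition sMap_comp (X Y Z : sSet) (g : sMap Y Z) (f : sMap X Y) : sMap X Z.
Proof.
by refine (@SMap X Z (fun n x => g n (f n x)) _) => m n h x; rewrite !snat.
Defined.

Lemma sd_fun_id n p (c : sd n p) : sd_fun (did n) c = c.
Proof.
apply: sig_eqPI; apply: functional_extensionality => i /=.
by apply: sig_eqPI; rewrite /= imset_id.
Qed.

Lemma sd_fun_comp l m n (f : dmap l m) (g : dmap m n) p (c : sd l p) :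
  sd_fun (dcomp g f) c = sd_fun g (sd_fun f c).
Proof.
apply: sig_eqPI; apply: functional_extensionality => i /=.
by apply: sig_eqPI; rewrite /= imset_comp.
Qed.

Definition Ex (X : sSet) : sSet.
Proof.
refine (@SSet (fun n => sMap (sd n) X)
  (fun m n f x => sMap_comp x (sd_map f)) _ _).
- by move=> n x; apply: sMap_eq => p c /=; rewrite sd_fun_id.
- by move=> l m n f g x; apply: sMap_eq => p c /=; rewrite sd_fun_comp.
Defined.

Definition s0 : dmap 1 0 := @DMap 1 0 (fun _ => ord0) (fun _ _ _ => leqnn 0).

Record msSet := MSSet {
  msX :> sSet;
  mW : msX 1 -> Prop;
  mW_degen : forall x : msX 0, mW (sact msX s0 x) }.

Record msMap (X Y : msSet) := MSMap {
  msm :> sMap X Y;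
  msm_mark : forall e : X 1, mW e -> mW (msm 1 e) }.

Definition sharp (C : sSet) : msSet := @MSSet C (fun _ => True) (fun _ => I).

Definition msub (X : msSet) (S : forall n, X n -> Prop)
  (HS : forall m n (f : dmap m n) x, S n x -> S m (sact X f x)) : msSet :=
  @MSSet (subsSet HS) (fun e => mW (sval e)) (fun x => mW_degen (sval x)).

Definition LPos (n : nat) (k : 'I_n.+1) := { A : {set 'I_n.+1} | k \in A }.

Definition maxs n (A : {set 'I_n.+1}) : nat := \max_(i in A) (i : nat).

Definition Lnerve n (k : 'I_n.+1) : sSet :=
  nerve (fun A B : LPos k => sval A \subset sval B).

Definition L n (k : 'I_n.+1) : msSet :=
  @MSSet (Lnerve k)
    (fun e => maxs (sval (sval e ord0)) = maxs (sval (sval e ord_max)))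
    (fun x => erefl).

(* simplices (chains) not containing the vertex [n] *)
Definition LJP n (k : 'I_n.+1) m (c : Lnerve k m) : Prop :=
  forall i, sval (sval c i) != [set: 'I_n.+1].

Lemma LJP_closed n (k : 'I_n.+1) m p (f : dmap m p) (c : Lnerve k p) :
  LJP c -> LJP (sact (Lnerve k) f c).
Proof. by move=> H i; apply: H. Qed.

Definition LJ n (k : 'I_n.+1) : msSet := @msub (L k) _ (@LJP_closed n k).

Definition weakly_closed_comp (X : msSet) : Prop :=
  forall g : sMap (horn (@Ordinal 3 1 erefl)) X,
    (forall e, mW (g 1 e)) ->
    exists h : sMap (Delta 2) X, extends_horn g h /\ forall e, mW (h 1 e).

Definition CLF (X : msSet) : Prop :=
  weakly_closed_comp X /\
  forall n (k : 'I_n.+1), 2 <= n -> 0 < k ->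
  forall g : msMap (LJ k) X, exists h : msMap (L k) X,
    forall p (y : LJ k p), h p (sval y) = g p y.

(* (=>) A map g : LJ^n_k -> C induces a horn Lambda^n_k -> Ex C, sending a simplex c of the
   horn and a chain B of subsets of [p] to g ({k} + c(B)).  Restricting a filler to the chains
   of subsets containing k extends g to L^n_k: on a chain with top A this is seen through the
   monotone retraction of [n] onto A, which misses some vertex j <> k and hence lies in the horn.
   (<=) Through the same retractions, a horn Lambda^n_k -> Ex C defines a map on the chains of
   sd Delta^n whose top is neither [n] nor [n] - {k}.  CLF, applied at a positive vertex after a
   transposition of [n], extends it over the chains of subsets containing k.  The remaining
   chains avoiding [n] - {k} are attached one inner horn at a time, by induction on the number
   of sets in the chain and of those missing k, using that C is a quasicategory.  Finally
   [n] - {k} is collapsed onto [n]. *)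

From Stdlib Require Import ClassicalEpsilon ProofIrrelevance FunctionalExtensionality Classical Lia.
From mathcomp Require Import all_boot fingroup perm zify.
Set Implicit Arguments. Unset Strict Implicit. Unset Printing Implicit Defensive.

Section Retraction.
Variable n : nat.
Implicit Types (E B : {set 'I_n.+1}) (x y : 'I_n.+1).

(* The largest element of E below x, or the least element of E if there is none. *)
Definition retr E x : 'I_n.+1 :=
  match [pick e in E | e <= x] with
  | Some w => [arg max_(e > w | (e \in E) && (e <= x)) (e : nat)]
  | None => match [pick e in E] with
            | Some w => [arg min_(e < w | e \in E) (e : nat)]
            | None => x end
  end.

Lemma retr_in E x : E != set0 -> retr E x \in E.
Proof.
move=> E0; rewrite /retr; case: pickP => [w /andP[wE wx]|nw].
  by case: arg_maxnP => [|i /andP[]]//; rewrite wE.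
case: pickP => [w wE|nE]; first by case: arg_minnP.
by case/set0Pn: E0 => e; rewrite nE.
Qed.

Lemma retr_id E x : x \in E -> retr E x = x.
Proof.
move=> xE; rewrite /retr; case: pickP => [w /andP[wE wx]|nw]; last first.
  by move: (nw x); rewrite xE leqnn.
case: arg_maxnP => [|i /andP[iE ix] H]; first by rewrite wE.
by apply/val_inj/eqP; rewrite eqn_leq ix; apply: H; rewrite xE leqnn.
Qed.

Lemma retr_mono E x y : x <= y -> retr E x <= retr E y.
Proof.
move=> xy; rewrite /retr.
case: (pickP (fun e => (e \in E) && (e <= x))) => [w /andP[wE wx]|nw].
  case: arg_maxnP => [|i /andP[iE ix] Hi]; first by rewrite wE.
  case: pickP => [w' /andP[w'E w'y]|nw']; last by move: (nw' i); rewrite iE (leq_trans ix xy).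
  case: arg_maxnP => [|i' /andP[i'E i'y] Hi']; first by rewrite w'E.
  by apply: Hi'; rewrite iE (leq_trans ix xy).
case: pickP => [w wE|nE]; last first.
  by move: (nE x); case: pickP => [w' /andP[w'E _]|]; [rewrite nE in w'E|].
case: arg_minnP => // i iE Hi.
case: pickP => [w' /andP[w'E w'y]|//].
case: arg_maxnP => [|i' /andP[i'E i'y] Hi']; first by rewrite w'E.
exact: leq_trans (Hi _ i'E) _.
Qed.

Definition retraction E : dmap n n := DMap (@retr_mono E).

Lemma retr_imset E B : B \subset E -> retr E @: B = B.
Proof.
move=> BE; rewrite -[RHS]imset_id; apply: eq_in_imset => x xB.
exact/retr_id/(subsetP BE).
Qed.

End Retraction.

Definition delta_of n p (f : dmap p n) : Delta n p := exist _ (dfun f) (@dmono _ _ f).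
Definition dmap_of n p (c : Delta n p) : dmap p n := DMap (proj2_sig c).

Lemma hornP_retraction n (k j : 'I_n.+1) (E : {set 'I_n.+1}) :
  E != set0 -> j \notin E -> j != k -> hornP k (delta_of (retraction E)).
Proof.
move=> E0 jE jk; exists j; split=> // i /=; apply/eqP=> e.
by move: (retr_in i E0); rewrite e (negbTE jE).
Qed.

Lemma exists_notin n (A : {set 'I_n.+1}) : A != setT -> exists j, j \notin A.
Proof.
move=> AT; apply/existsP; move: AT; apply: contraR; rewrite negb_exists => /forallP H.
by apply/eqP/setP => x; rewrite inE; move: (H x); rewrite negbK.
Qed.

Definition top_set n q (c : sd n q) : {set 'I_n.+1} := sval (sval c ord_max).

Lemma sub_top_set n q (c : sd n q) i : sval (sval c i) \subset top_set c.
Proof. exact: (proj2_sig c i ord_max (leq_ord i)). Qed.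

Lemma sd_fun_retraction p q (E : {set 'I_p.+1}) (c : sd p q) :
  top_set c \subset E -> sd_fun (retraction E) c = c.
Proof.
move=> cE; apply: sig_eqPI; apply: functional_extensionality => i; apply: sig_eqPI => /=.
exact/retr_imset/(subset_trans (sub_top_set c i)).
Qed.

Lemma Ex_retraction X n (H : sMap (Delta n) (Ex X)) (E : {set 'I_n.+1}) q (c : sd n q) :
  top_set c \subset E ->
  H n (delta_of (did n)) q c = H n (delta_of (retraction E)) q c.
Proof.
move=> cE; rewrite -{1}(sd_fun_retraction cE).
have -> : delta_of (retraction E) = sact (Delta n) (retraction E) (delta_of (did n)).
  exact: sig_eqPI.
by rewrite snat.
Qed.

(** * Kan [Ex C] gives the lifting property against [LJ^n_k -> L^n_k] *)

Section KanExLifting.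
Variables (C : sSet) (n : nat) (k : 'I_n.+1).

Definition cone_L p (c : 'I_p.+1 -> 'I_n.+1) q (B : sd p q) : Lnerve k q.
Proof.
refine (exist _ (fun i => exist (fun A : {set 'I_n.+1} => k \in A)
                  (k |: (c @: sval (sval B i))) (setU11 k _)) _).
by move=> i j ij; apply/setUS/imsetS/(proj2_sig B).
Defined.

Lemma cone_L_horn p (y : horn k p) q (B : sd p q) : LJP (cone_L (sval (sval y)) B).
Proof.
case: y => [c [j [jk Hj]]] i /=; apply/eqP => E.
have : j \in k |: (sval c @: sval (sval B i)) by rewrite E inE.
by rewrite !inE (negbTE jk) /= => /imsetP[x _ /eqP]; rewrite eq_sym (negbTE (Hj x)).
Qed.

Definition cone_LJ p (y : horn k p) q (B : sd p q) : LJ k q := exist _ _ (cone_L_horn y B).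

Lemma cone_LJ_natr p (y : horn k p) q q' (f : dmap q' q) (B : sd p q) :
  cone_LJ y (sact (sd p) f B) = sact (LJ k) f (cone_LJ y B).
Proof. by apply: sig_eqPI; apply: sig_eqPI. Qed.

Lemma cone_LJ_natl p p' (f : dmap p' p) (y : horn k p) q (B : sd p' q) :
  cone_LJ (sact (horn k) f y) B = cone_LJ y (sd_fun f B).
Proof.
apply: sig_eqPI; apply: sig_eqPI; apply: functional_extensionality => i /=.
by apply: sig_eqPI; rewrite /= -imset_comp.
Qed.

Definition Ex_of_horn_simplex (g : sMap (LJ k) C) p (y : horn k p) : Ex C p.
Proof.
refine (@SMap (sd p) C (fun q B => g q (cone_LJ y B)) _).
by move=> q q' f B; rewrite cone_LJ_natr snat.
Defined.

Definition Ex_horn_of_LJ (g : sMap (LJ k) C) : sMap (horn k) (Ex C).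
Proof.
refine (@SMap (horn k) (Ex C) (Ex_of_horn_simplex g) _).
by move=> p p' f y; apply: sMap_eq => q B /=; rewrite cone_LJ_natl.
Defined.

Lemma LPos_neq0 (A : LPos k) : sval A != set0.
Proof. by apply/set0Pn; exists k; exact: (proj2_sig A). Qed.

Definition sd_of_L q (x : Lnerve k q) : sd n q.
Proof.
refine (exist _ (fun i => exist (fun B : {set 'I_n.+1} => B != set0) (sval (sval x i))
                            (LPos_neq0 (sval x i))) _).
exact: (proj2_sig x).
Defined.

Lemma sd_of_L_nat q q' (f : dmap q' q) (x : Lnerve k q) :
  sd_of_L (sact (Lnerve k) f x) = sact (sd n) f (sd_of_L x).
Proof. by apply: sig_eqPI; apply: functional_extensionality => i; apply: sig_eqPI. Qed.

Definition restrict_to_L (H : Ex C n) : sMap (Lnerve k) C.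
Proof.
refine (@SMap (Lnerve k) C (fun q x => H q (sd_of_L x)) _).
by move=> q q' f x; rewrite sd_of_L_nat snat.
Defined.

Lemma Kan_Ex_LJ_extension : Kan_complex (Ex C) -> 0 < n ->
  forall g : msMap (LJ k) (sharp C), exists h : msMap (L k) (sharp C),
    forall p (y : LJ k p), h p (sval y) = g p y.
Proof.
move=> KC n0 g; have [H Hext] := KC n k n0 (Ex_horn_of_LJ g).
exists (@MSMap (L k) (sharp C) (restrict_to_L (H n (delta_of (did n)))) (fun _ _ => I)).
move=> p y /=; set A := top_set (sd_of_L (sval y)).
have [j jA] := exists_notin (proj2_sig y ord_max).
have kA : k \in A := proj2_sig (sval (sval y) ord_max).
have jk : j != k by apply: contraNneq jA => ->.
have hA := hornP_retraction (LPos_neq0 (sval (sval y) ord_max)) jA jk.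
rewrite (Ex_retraction H (subxx A)).
have -> : delta_of (retraction A) = sval (exist _ _ hA : horn k n) by [].
rewrite Hext /=; congr (g p _); apply: sig_eqPI; apply: sig_eqPI.
apply: functional_extensionality => i; apply: sig_eqPI => /=.
rewrite retr_imset; last exact: sub_top_set (sd_of_L (sval y)) i.
by apply/setUidPr; rewrite sub1set; exact: (proj2_sig (sval (sval y) i)).
Qed.

End KanExLifting.

Section ChainEnum.
Variable n : nat.
Local Notation SS := {set 'I_n.+1}.
Implicit Types (V : {set SS}) (A B : SS).

Definition is_chain V := forall A B, A \in V -> B \in V -> (A \subset B) || (B \subset A).

Definition card_le A B := #|A| <= #|B|.
Definition chain_seq V := sort card_le (enum V).
Definition chain_dim V := #|V|.-1.
Definition chain_nth V (j : nat) : SS := nth set0 (chain_seq V) j.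
Definition chain_index V A : nat := index A (chain_seq V).

Lemma size_chain_seq V : size (chain_seq V) = #|V|.
Proof. by rewrite size_sort cardE. Qed.

Lemma mem_chain_seq V A : (A \in chain_seq V) = (A \in V).
Proof. by rewrite mem_sort mem_enum. Qed.

Lemma chain_dimS V : V != set0 -> (chain_dim V).+1 = #|V|.
Proof. by move=> V0; rewrite /chain_dim prednK // card_gt0. Qed.

Lemma chain_nth_in V (j : nat) : j < #|V| -> chain_nth V j \in V.
Proof. by move=> jV; rewrite -mem_chain_seq mem_nth // size_chain_seq. Qed.

Lemma chain_sub_card V A B : is_chain V -> A \in V -> B \in V -> #|A| <= #|B| -> A \subset B.
Proof.
move=> cV AV BV AB; case/orP: (cV A B AV BV) => // BA.
by have /eqP -> : B == A by rewrite eqEcard BA AB.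
Qed.

Lemma chain_nth_mono V (j j' : nat) : is_chain V -> j <= j' -> j' < #|V| ->
  chain_nth V j \subset chain_nth V j'.
Proof.
move=> cV jj' j'V; have jV := leq_ltn_trans jj' j'V.
apply: chain_sub_card cV (chain_nth_in jV) (chain_nth_in j'V) _.
apply: (sorted_leq_nth (leT := card_le)) => //.
- by move=> ???; apply: leq_trans.
- by move=> ?; apply: leqnn.
- by apply: sort_sorted => ??; apply: leq_total.
- by rewrite inE size_chain_seq.
- by rewrite inE size_chain_seq.
Qed.

Lemma chain_index_lt V A : A \in V -> chain_index V A < #|V|.
Proof. by move=> AV; rewrite -size_chain_seq index_mem mem_chain_seq. Qed.

Lemma chain_indexK V A : A \in V -> chain_nth V (chain_index V A) = A.
Proof. by move=> AV; rewrite /chain_nth nth_index // mem_chain_seq. Qed.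

Lemma chain_nthK V (j : nat) : j < #|V| -> chain_index V (chain_nth V j) = j.
Proof.
by move=> jV; rewrite /chain_index index_uniq ?sort_uniq ?enum_uniq ?size_chain_seq.
Qed.

Lemma chain_index_inj V A B : A \in V -> B \in V -> chain_index V A = chain_index V B -> A = B.
Proof. by move=> AV BV e; rewrite -(chain_indexK AV) -(chain_indexK BV) e. Qed.

Lemma chain_index_mono V A B : is_chain V -> A \in V -> B \in V -> A \subset B ->
  chain_index V A <= chain_index V B.
Proof.
move=> cV AV BV AB; rewrite leqNgt; apply/negP => lt.
have := chain_nth_mono cV (ltnW lt) (chain_index_lt AV); rewrite !chain_indexK // => BA.
have AeB : A = B by apply/eqP; rewrite eqEsubset AB BA.
by move: lt; rewrite AeB ltnn.
Qed.

Lemma chain_index_strict V A B : is_chain V -> A \in V -> B \in V -> A \proper B ->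
  chain_index V A < chain_index V B.
Proof.
move=> cV AV BV /andP[AB nBA]; rewrite ltn_neqAle chain_index_mono // andbT.
by apply/eqP => /(chain_index_inj AV BV) e; move: nBA; rewrite e subxx.
Qed.

End ChainEnum.

Section SdChains.
Variables (C : sSet) (n : nat).
Local Notation SS := {set 'I_n.+1}.
Implicit Types (V W : {set SS}) (A B : SS).

Definition sets_of q (c : sd n q) : {set SS} := [set sval (sval c i) | i : 'I_q.+1].

Lemma sets_of_sact q q' (f : dmap q' q) (c : sd n q) : sets_of (sact (sd n) f c) \subset sets_of c.
Proof. by apply/subsetP => A /imsetP[i _ ->]; apply/imsetP; exists (f i). Qed.

Lemma sets_of_chain q (c : sd n q) : is_chain (sets_of c).
Proof.
move=> A B /imsetP[i _ ->] /imsetP[j _ ->].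
case: (leqP i j) => ij; first by rewrite (proj2_sig c i j ij).
by rewrite (proj2_sig c j i (ltnW ij)) orbT.
Qed.

Lemma set0_notin_sets_of q (c : sd n q) : set0 \notin sets_of c.
Proof. by apply/imsetP => -[i _ e]; move: (proj2_sig (sval c i)); rewrite -e eqxx. Qed.

Lemma top_set_in q (c : sd n q) : top_set c \in sets_of c.
Proof. exact: imset_f. Qed.

Definition natural_on (S : {set SS} -> Prop) (G : forall q, sd n q -> C q) :=
  forall q q' (f : dmap q' q) (c : sd n q), S (sets_of c) ->
    G q' (sact (sd n) f c) = sact C f (G q c).

Definition down_closed (S : {set SS} -> Prop) := forall V W, W \subset V -> S V -> S W.

Lemma natural_on_sub (S S' : {set SS} -> Prop) G :
  natural_on S G -> (forall V, S' V -> S V) -> natural_on S' G.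
Proof. by move=> nG H q q' f c Sc; apply/nG/H. Qed.

Lemma setT_neq0 : [set: 'I_n.+1] != set0.
Proof. by apply/set0Pn; exists ord0. Qed.

(* Junk value [n] for the empty set. *)
Definition toNE A : NE n := insubd (exist _ setT setT_neq0) A.

Lemma toNE_val A : A != set0 -> sval (toNE A) = A.
Proof. by move=> A0; rewrite /toNE insubdK. Qed.

Definition nondeg_chain V := [/\ is_chain V, V != set0 & set0 \notin V].

(* A chain V of non-empty sets is the nerve of the simplex Delta^(#|V|-1). *)
Definition sd_of_simplex V (HV : nondeg_chain V) p (u : Delta (chain_dim V) p) : sd n p.
Proof.
refine (exist _ (fun i => toNE (chain_nth V (sval u i))) _).
move=> i j ij; have [cV V0 V0'] := HV.
have lt l : sval u l < #|V| by rewrite -(chain_dimS V0) ltn_ord.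
have nz l : chain_nth V (sval u l) != set0.
  by apply: contraNneq V0' => <-; apply: chain_nth_in.
by rewrite !toNE_val //; apply: chain_nth_mono => //; exact: (proj2_sig u i j ij).
Defined.

Lemma sd_of_simplex_nat V (HV : nondeg_chain V) p p' (f : dmap p' p) (u : Delta (chain_dim V) p) :
  sd_of_simplex HV (sact (Delta (chain_dim V)) f u) = sact (sd n) f (sd_of_simplex HV u).
Proof. by apply: sig_eqPI. Qed.

Lemma sets_of_sd_of_simplex V (HV : nondeg_chain V) p (u : Delta (chain_dim V) p) :
  sets_of (sd_of_simplex HV u) = [set chain_nth V (sval u i) | i : 'I_p.+1].
Proof.
have [_ V0 V0'] := HV; apply: eq_imset => i /=.
have ui : sval u i < #|V| by rewrite -(chain_dimS V0) ltn_ord.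
by rewrite toNE_val //; apply: contraNneq V0' => <-; apply: chain_nth_in.
Qed.

Definition simplex_of_sd V (HV : nondeg_chain V) q (c : sd n q) (H : sets_of c \subset V) :
  Delta (chain_dim V) q.
Proof.
refine (exist _ (fun i => inord (chain_index V (sval (sval c i)))) _).
move=> i j ij /=; have [cV V0 _] := HV.
have mi l : sval (sval c l) \in V by apply: (subsetP H); apply: imset_f.
rewrite !inordK ?(chain_dimS V0) ?chain_index_lt //.
by apply: chain_index_mono => //; exact: (proj2_sig c i j ij).
Defined.

Lemma simplex_of_sdK V (HV : nondeg_chain V) q (c : sd n q) (H : sets_of c \subset V) :
  sd_of_simplex HV (simplex_of_sd HV H) = c.
Proof.
apply: sig_eqPI; apply: functional_extensionality => i /=.
have [cV V0 _] := HV.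
have ci : sval (sval c i) \in V by apply: (subsetP H); apply: imset_f.
apply: sig_eqPI; rewrite inordK ?(chain_dimS V0) ?chain_index_lt //.
rewrite chain_indexK // toNE_val //; exact: (proj2_sig (sval c i)).
Qed.

Lemma simplex_of_sd_nat V (HV : nondeg_chain V) q q' (f : dmap q' q) (c : sd n q)
    (H : sets_of c \subset V) (H' : sets_of (sact (sd n) f c) \subset V) :
  simplex_of_sd HV H' = sact (Delta (chain_dim V)) f (simplex_of_sd HV H).
Proof. by apply: sig_eqPI. Qed.

End SdChains.

(** * Extending along a family of inner horns *)

Section InnerHornStep.
Variables (C : sSet) (n : nat) (qC : quasicategory C).
Local Notation SS := {set 'I_n.+1}.
Implicit Types (V s : {set SS}) (A : SS).
Variables (S T : {set SS} -> Prop) (pivot : {set SS} -> SS) (G : forall q, sd n q -> C q).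
Hypotheses (S_down : down_closed S) (G_nat : natural_on S G).
Hypothesis T_nondeg : forall s, T s -> nondeg_chain s.
Hypothesis T_pivot : forall s, T s -> [/\ pivot s \in s,
  exists2 a, a \in s & a \proper pivot s & exists2 b, b \in s & pivot s \proper b].
Hypothesis T_faces : forall s x, T s -> x \in s -> x != pivot s -> S (s :\ x).
Hypothesis T_pivot_face : forall s, T s -> ~ S (s :\ pivot s).
Hypothesis T_meet : forall s s', T s -> T s' -> s <> s' -> S (s :&: s').

Definition pivot_vertex s : 'I_(chain_dim s).+1 := inord (chain_index s (pivot s)).

Section OneSimplex.
Variables (s : {set SS}) (Ts : T s).
Local Notation sd_of := (sd_of_simplex (T_nondeg Ts)).

Lemma pivot_vertex_val : (pivot_vertex s : nat) = chain_index s (pivot s).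
Proof.
have [_ s0 _] := T_nondeg Ts; have [ps _ _] := T_pivot Ts.
by rewrite inordK // (chain_dimS s0) chain_index_lt.
Qed.

Lemma chain_dim_vertex (j : 'I_(chain_dim s).+1) : j < #|s|.
Proof. by have [_ s0 _] := T_nondeg Ts; rewrite -(chain_dimS s0) ltn_ord. Qed.

Lemma S_horn p (y : horn (pivot_vertex s) p) : S (sets_of (sd_of (sval y))).
Proof.
case: y => u [j [jp Hj]] /=.
have js := chain_dim_vertex j.
apply: (S_down (V := s :\ chain_nth s j)); last first.
  apply: T_faces => //; first exact: chain_nth_in.
  apply/eqP => e; move: jp; rewrite /pivot_vertex -e chain_nthK //.
  by apply/negP; rewrite negbK; apply/eqP/val_inj; rewrite /= inordK.
rewrite sets_of_sd_of_simplex; apply/subsetP => A /imsetP[i _ ->].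
rewrite !inE chain_nth_in ?andbT ?chain_dim_vertex //.
apply/negP => /eqP /(congr1 (chain_index s)); rewrite !chain_nthK ?chain_dim_vertex //.
by move/val_inj => e; move: (Hj i); rewrite e eqxx.
Qed.

Lemma hornP_of_S p (u : Delta (chain_dim s) p) :
  S (sets_of (sd_of u)) -> hornP (pivot_vertex s) u.
Proof.
move=> Su; apply: NNPP => nh; apply: (T_pivot_face Ts); apply: S_down Su.
have [ps _ _] := T_pivot Ts; have [cs s0 _] := T_nondeg Ts.
apply/subsetP => x; rewrite !inE => /andP[xp xs].
have xl : chain_index s x < (chain_dim s).+1 by rewrite (chain_dimS s0) chain_index_lt.
have [l ul] : exists l, sval u l = Ordinal xl.
  apply: NNPP => nl; apply: nh; exists (Ordinal xl); split.
    apply/eqP => /(congr1 val) /=; rewrite pivot_vertex_val => /(chain_index_inj xs ps) e.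
    by move: xp; rewrite e eqxx.
  by move=> l; apply/eqP => e; apply: nl; exists l.
by rewrite sets_of_sd_of_simplex; apply/imsetP; exists l => //; rewrite ul /= chain_indexK.
Qed.

Definition pivot_horn : sMap (horn (pivot_vertex s)) C.
Proof.
refine (@SMap (horn (pivot_vertex s)) C (fun p y => G (sd_of (sval y))) _).
move=> p p' f y /=; rewrite -G_nat; last exact: S_horn.
by rewrite -sd_of_simplex_nat.
Defined.

Lemma pivot_horn_fillable : exists h : sMap (Delta (chain_dim s)) C, extends_horn pivot_horn h.
Proof.
have [cs s0 _] := T_nondeg Ts; have [ps [a ai ap] [b bi pb]] := T_pivot Ts.
apply: qC; rewrite pivot_vertex_val.
- exact: leq_ltn_trans (chain_index_strict cs ai ps ap).
- rewrite -ltnS (chain_dimS s0).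
  exact: leq_ltn_trans (chain_index_strict cs ps bi pb) (chain_index_lt bi).
Qed.

Definition pivot_filler : sMap (Delta (chain_dim s)) C :=
  proj1_sig (constructive_indefinite_description _ pivot_horn_fillable).

Lemma pivot_fillerE p (y : horn (pivot_vertex s) p) :
  pivot_filler p (sval y) = G (sd_of (sval y)).
Proof. exact: (proj2_sig (constructive_indefinite_description _ pivot_horn_fillable)). Qed.

End OneSimplex.

(* Off S, a simplex lies in at most one s with T s (by T_meet) and is sent through the
   filler of s. *)
Definition ext_G q (c : sd n q) : C q :=
  match excluded_middle_informative (S (sets_of c)) with
  | left _ => G c
  | right _ =>
    match excluded_middle_informative (exists s, T s /\ sets_of c \subset s) with
    | left e => let (s, Hs) := constructive_indefinite_description _ e in
                pivot_filler (proj1 Hs) q (simplex_of_sd (T_nondeg (proj1 Hs)) (proj2 Hs))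
    | right _ => G c
    end
  end.

Lemma ext_G_S q (c : sd n q) : S (sets_of c) -> ext_G c = G c.
Proof. by rewrite /ext_G; case: excluded_middle_informative. Qed.

Lemma ext_G_T q (c : sd n q) s (Ts : T s) (H : sets_of c \subset s) : ~ S (sets_of c) ->
  ext_G c = pivot_filler Ts q (simplex_of_sd (T_nondeg Ts) H).
Proof.
move=> nS; rewrite /ext_G; case: excluded_middle_informative => // _.
case: excluded_middle_informative => [e|]; last by case; exists s.
case: (constructive_indefinite_description _ e) => s' Hs'.
have es : s' = s.
  apply: NNPP => ne; apply/nS/(S_down _ (T_meet (proj1 Hs') Ts ne)).
  by rewrite subsetI (proj2 Hs') H.
by subst s'; rewrite (proof_irrelevance _ (proj1 Hs') Ts) (proof_irrelevance _ (proj2 Hs') H).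
Qed.

Lemma ext_G_natural : natural_on (fun V => S V \/ exists s, T s /\ V \subset s) ext_G.
Proof.
move=> q q' f c Sc.
have [Sc'|nSc] := classic (S (sets_of c)).
  by rewrite !ext_G_S //; [apply: G_nat | apply: S_down (sets_of_sact f c) Sc'].
have [s [Ts cs]] : exists s, T s /\ sets_of c \subset s by case: Sc.
have cs' := subset_trans (sets_of_sact f c) cs.
rewrite (ext_G_T Ts cs nSc).
have [Sfc|nSfc] := classic (S (sets_of (sact (sd n) f c))); last first.
  by rewrite (ext_G_T Ts cs' nSfc) (simplex_of_sd_nat _ cs cs') snat.
rewrite ext_G_S // -(simplex_of_sdK (T_nondeg Ts) cs') (simplex_of_sd_nat _ cs cs') -snat.
set u := sact _ f _.
have hu : hornP (pivot_vertex s) u.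
  by apply: hornP_of_S; rewrite /u -simplex_of_sd_nat simplex_of_sdK.
exact: esym (pivot_fillerE Ts (exist _ u hu : horn _ q')).
Qed.

Lemma extend_along_inner_horns : exists G' : forall q, sd n q -> C q,
  natural_on (fun V => S V \/ exists s, T s /\ V \subset s) G' /\
  forall q (c : sd n q), S (sets_of c) -> G' q c = G c.
Proof. by exists ext_G; split; [exact: ext_G_natural | exact: ext_G_S]. Qed.

End InnerHornStep.

(** * The filtration of chains avoiding [n] - {k} *)

Section MissingK.
Variables (n : nat) (k : 'I_n.+1).
Local Notation SS := {set 'I_n.+1}.
Implicit Types (V W : {set SS}) (A B Y x : SS).

Definition compl_k : SS := [set~ k].
Definition in_L V := forall A, A \in V -> k \in A.
Definition in_LJ V := setT \notin V /\ in_L V.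
Definition admissible V := [/\ is_chain V, set0 \notin V & compl_k \notin V].
Definition missing V := [set A in V | k \notin A].
Definition missing_max V : SS := \bigcup_(A in missing V) A.
Definition pivot_set V : SS := k |: missing_max V.

Lemma is_chain_sub V W : W \subset V -> is_chain V -> is_chain W.
Proof. by move=> WV cV A B AW BW; apply: cV; apply: (subsetP WV). Qed.

Lemma admissible_sub V W : W \subset V -> admissible V -> admissible W.
Proof.
move=> WV [cV V0 Vk]; split; first exact: is_chain_sub cV.
- by apply: contra V0; apply: (subsetP WV).
- by apply: contra Vk; apply: (subsetP WV).
Qed.

Lemma sub_missing_max V B : B \in missing V -> B \subset missing_max V.
Proof. exact: bigcup_sup. Qed.

Lemma missing_maxE V A : A \in missing V -> (forall B, B \in missing V -> B \subset A) ->
  missing_max V = A.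
Proof.
move=> AV H; apply/eqP; rewrite eqEsubset sub_missing_max // andbT.
exact/bigcupsP.
Qed.

Lemma missing_max_in V : is_chain V -> missing V != set0 -> missing_max V \in missing V.
Proof.
move=> cV /set0Pn[A0 A0m].
case: (@arg_maxnP _ A0 (mem (missing V)) (fun A => #|A|) A0m) => A Am H.
rewrite (missing_maxE Am) // => B Bm; move: (Am) (Bm); rewrite !inE => /andP[AV _] /andP[BV _].
exact: chain_sub_card cV BV AV (H B Bm).
Qed.

Lemma k_notin_missing_max V : k \notin missing_max V.
Proof. by apply/bigcupP => -[A]; rewrite inE => /andP[_ /negbTE ->]. Qed.

Lemma k_in_pivot_set V : k \in pivot_set V.
Proof. exact: setU11. Qed.

Lemma missing_max_proper_pivot V : missing_max V \proper pivot_set V.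
Proof.
rewrite properE subsetUr /=; apply/negP => /subsetP /(_ k (setU11 _ _)).
by rewrite (negbTE (k_notin_missing_max V)).
Qed.

Lemma pivot_set_sub V A : is_chain V -> A \in V -> k \in A -> pivot_set V \subset A.
Proof.
move=> cV AV kA; rewrite /pivot_set subUset sub1set kA /=.
apply/bigcupsP => B; rewrite inE => /andP[BV kB].
case/orP: (cV A B AV BV) => // AB.
by move: kB; rewrite (subsetP AB _ kA).
Qed.

Lemma missing_mono V W : V \subset W -> missing V \subset missing W.
Proof. by move=> VW; apply/subsetP => A; rewrite !inE => /andP[/(subsetP VW) -> ->]. Qed.

Lemma missing_setU1 V Y : k \in Y -> missing (Y |: V) = missing V.
Proof.
move=> kY; apply/setP => A; rewrite !inE.
by case: (A =P Y) => [->|]; rewrite ?kY ?andbF.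
Qed.

Lemma missing_setD1 V x : missing (V :\ x) = missing V :\ x.
Proof. by apply/setP => A; rewrite !inE andbA. Qed.

Lemma pivot_set_missing V W : missing V = missing W -> pivot_set V = pivot_set W.
Proof. by rewrite /pivot_set /missing_max => ->. Qed.

Lemma pivot_set_setU1 V : pivot_set (pivot_set V |: V) = pivot_set V.
Proof. exact/pivot_set_missing/missing_setU1/k_in_pivot_set. Qed.

Lemma pivot_set_neq_compl V : pivot_set V != compl_k.
Proof. by apply/eqP => e; move: (k_in_pivot_set V); rewrite e !inE eqxx. Qed.

Lemma pivot_set_neq_setT V : missing_max V \in V -> compl_k \notin V -> pivot_set V != setT.
Proof.
move=> mV Vk; apply/eqP => e; suff eb : missing_max V = compl_k by rewrite -eb mV in Vk.
apply/setP => x; rewrite !inE; case: (x =P k) => [->|/eqP xk].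
  exact/negbTE/k_notin_missing_max.
by have := in_setT x; rewrite -e !inE (negbTE xk).
Qed.

End MissingK.

Lemma setU1D1 (T : finType) (y x : T) (V : {set T}) : x != y -> (y |: V) :\ x = y |: (V :\ x).
Proof.
move=> xy; apply/setP => A; rewrite !inE; case: (A =P x) => [->|_] //=.
by rewrite (negbTE xy).
Qed.

Section Filtration.
Variables (n : nat) (k : 'I_n.+1).
Local Notation SS := {set 'I_n.+1}.
Implicit Types (V W s tau : {set SS}) (A B x : SS).
Local Notation admissible := (admissible k).
Local Notation compl_k := (compl_k k).
Local Notation missing := (missing k).
Local Notation missing_max := (missing_max k).
Local Notation pivot_set := (pivot_set k).

Definition base V := admissible V /\ (setT \notin V \/ in_L k V).

(* The chains tau of the filtration that are not yet reached: the simplex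
   pivot_set tau |: tau is attached along its inner horn at pivot_set tau. *)
Definition needs_pivot V :=
  [/\ admissible V, setT \in V, missing V != set0 & pivot_set V \notin V].

Definition card_bound := #|{set 'I_n.+1}|.+1.

(* Lexicographic order on (#|V|, #|missing V|). *)
Definition weight V := #|V| * card_bound + #|missing V|.

Definition stage t V :=
  base V \/ exists tau, needs_pivot tau /\ weight tau < t /\ V \subset pivot_set tau |: tau.

Definition new_at t s := exists tau, needs_pivot tau /\ weight tau = t /\ s = pivot_set tau |: tau.

Lemma card_lt_bound V : #|V| < card_bound.
Proof. by rewrite ltnS max_card. Qed.

Lemma base_down : down_closed base.
Proof.
move=> V W WV [aV H]; split; first exact: admissible_sub aV.
case: H => [VT|H]; [left | right].
- by apply: contra VT; apply: (subsetP WV).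
- by move=> A AW; apply/H/(subsetP WV).
Qed.

Lemma stage_down t : down_closed (stage t).
Proof.
move=> V W WV [H|[tau [tn [tt Vt]]]]; first by left; apply: base_down H.
by right; exists tau; do 2!split => //; apply: subset_trans Vt.
Qed.

Lemma weight_eq V W : weight V = weight W -> #|V| = #|W| /\ #|missing V| = #|missing W|.
Proof.
rewrite /weight => e; have mV := card_lt_bound (missing V); have mW := card_lt_bound (missing W).
have := congr1 (divn^~ card_bound) e; have := congr1 (modn^~ card_bound) e.
by rewrite !modnMDl !divnMDl // !modn_small // !divn_small // !addn0 => -> ->.
Qed.

Lemma weight_lt V W : weight V < weight W ->
  #|V| <= #|W| /\ (#|V| = #|W| -> #|missing V| < #|missing W|).
Proof.
rewrite /weight => lt; have := card_lt_bound (missing V); have := card_lt_bound (missing W).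
split; first by nia.
by move=> e; rewrite e in lt; lia.
Qed.

Lemma weight_setD1 V x : x \in V -> weight (V :\ x) < weight V.
Proof.
move=> xV; have := cardsD1 x V; rewrite xV /= => cV.
rewrite /weight cV mulnDl mul1n [card_bound + _]addnC -addnA ltn_add2l.
exact/ltn_addr/card_lt_bound.
Qed.

Section NeedsPivot.
Variables (tau : {set SS}) (tn : needs_pivot tau).
Local Notation b := (missing_max tau).
Local Notation y := (pivot_set tau).

Lemma np_admissible : admissible tau. Proof. by case: tn. Qed.
Lemma np_chain : is_chain tau. Proof. by case: np_admissible. Qed.
Lemma np_setT : setT \in tau. Proof. by case: tn. Qed.
Lemma np_pivot_notin : y \notin tau. Proof. by case: tn. Qed.
Lemma np_missing_max : b \in missing tau.
Proof. by case: tn => _ _ m0 _; apply: missing_max_in np_chain m0. Qed.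
Lemma np_missing_max_in : b \in tau.
Proof. by move: np_missing_max; rewrite inE => /andP[]. Qed.

Lemma np_pivot_proper_setT : y \proper setT.
Proof.
rewrite properE subsetT /=; apply/negP => H.
have [_ _ Tk] := np_admissible.
by move: (pivot_set_neq_setT np_missing_max_in Tk); rewrite eqEsubset subsetT H.
Qed.

Lemma np_chain_setU1 : is_chain (y |: tau).
Proof.
have cy B : B \in tau -> (y \subset B) || (B \subset y).
  move=> BV; case kB: (k \in B); first by rewrite (pivot_set_sub np_chain BV kB).
  have Bb : B \subset b by apply: sub_missing_max; rewrite inE BV kB.
  by rewrite (subset_trans Bb (proper_sub (missing_max_proper_pivot k tau))) orbT.
move=> A B; rewrite !inE => /orP[/eqP->|AV] /orP[/eqP->|BV].
- by rewrite subxx.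
- exact: cy.
- by rewrite orbC; apply: cy.
- exact: np_chain.
Qed.

Lemma np_admissible_setU1 : admissible (y |: tau).
Proof.
have [_ V0 Vk] := np_admissible; split; first exact: np_chain_setU1.
- rewrite !inE negb_or V0 andbT; apply/eqP => e.
  by move: (k_in_pivot_set k tau); rewrite -e inE.
- by rewrite !inE negb_or Vk andbT eq_sym pivot_set_neq_compl.
Qed.

Lemma np_nondeg_setU1 : nondeg_chain (y |: tau).
Proof.
have [c0 V0 _] := np_admissible_setU1.
by split => //; apply/set0Pn; exists y; rewrite setU11.
Qed.

Lemma np_admissible_setD1 x : admissible (tau :\ x).
Proof. exact: admissible_sub (subD1set _ _) np_admissible. Qed.

Lemma np_admissible_setU1D1 x : x != y -> admissible (y |: tau :\ x).
Proof.
by move=> xy; rewrite -setU1D1 //; exact: admissible_sub (subD1set _ _) np_admissible_setU1.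
Qed.

Lemma np_pivot_setD1 x : x != b -> pivot_set (tau :\ x) = y.
Proof.
move=> xb; congr (k |: _); apply: missing_maxE.
  by rewrite missing_setD1 in_setD1 np_missing_max andbT eq_sym.
by move=> B; rewrite missing_setD1 => /setD1P[_ Bm]; apply: sub_missing_max.
Qed.

Lemma np_setD1 x : x \in tau -> x != setT -> missing (tau :\ x) != set0 ->
  pivot_set (tau :\ x) = y -> needs_pivot (tau :\ x).
Proof.
move=> xt xT m0 ey; split => //; first exact: np_admissible_setD1.
- by rewrite !inE np_setT andbT eq_sym.
- by rewrite ey !inE (negbTE np_pivot_notin) andbF.
Qed.

Lemma np_setD1_missing_max : missing (tau :\ b) != set0 ->
  pivot_set (tau :\ b) != y -> needs_pivot (y |: tau :\ b).
Proof.
move=> m0 ey; have by' : b != y by rewrite proper_neq // missing_max_proper_pivot.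
have ey' : pivot_set (y |: tau :\ b) = pivot_set (tau :\ b).
  exact/pivot_set_missing/missing_setU1/k_in_pivot_set.
split.
- exact: np_admissible_setU1D1.
- suff bT : setT != b by rewrite !inE np_setT bT orbT.
  by apply/eqP => e; move: (k_notin_missing_max k tau); rewrite -e inE.
- by rewrite missing_setU1 ?k_in_pivot_set.
rewrite ey' !inE negb_or ey /=; apply/negP => /andP[_ y't].
have h1 := pivot_set_sub np_chain y't (k_in_pivot_set k _).
have h2 : pivot_set (tau :\ b) \subset y.
  apply/setUS/bigcupsP => B; rewrite missing_setD1 => /setD1P[_ Bm].
  exact: sub_missing_max.
by move: ey; rewrite eqEsubset h1 h2.
Qed.

Lemma np_weight_setU1D1 : weight (y |: tau :\ b) < weight tau.
Proof.
have yb : y \notin tau :\ b by rewrite !inE (negbTE np_pivot_notin) andbF.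
have := cardsD1 b tau; have := cardsD1 b (missing tau).
rewrite np_missing_max np_missing_max_in /= => cm ct.
rewrite /weight missing_setU1 ?k_in_pivot_set // missing_setD1 cardsU1 yb /= -ct cm.
by rewrite ltn_add2l.
Qed.

End NeedsPivot.

Lemma new_at_faces t s x : new_at t s -> x \in s -> x != pivot_set s -> stage t (s :\ x).
Proof.
case=> tau [tn [wt ->]]; rewrite pivot_set_setU1 => xs xy.
have xt : x \in tau by move: xs; rewrite !inE (negbTE xy).
have ax := np_admissible_setU1D1 tn xy.
rewrite setU1D1 //; have [xT|xT] := eqVneq x setT.
  left; split => //; left; rewrite !inE xT eqxx /= orbF eq_sym.
  exact: proper_neq (np_pivot_proper_setT tn).
have [m0|m0] := eqVneq (missing (tau :\ x)) set0.
  left; split => //; right => A; rewrite !inE => /orP[/eqP->|/andP[Ax At]].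
    exact: k_in_pivot_set.
  apply: contraT => kA; suff : A \in missing (tau :\ x) by rewrite m0 inE.
  by rewrite !inE Ax At.
have [ey|ey] := eqVneq (pivot_set (tau :\ x)) (pivot_set tau).
  right; exists (tau :\ x); split; first exact: np_setD1.
  by rewrite -wt weight_setD1 // ey.
have xb : x = missing_max tau by apply: contraNeq ey => /(np_pivot_setD1 tn) ->.
right; exists (pivot_set tau |: tau :\ x); rewrite xb in m0 ey *; split.
  exact: np_setD1_missing_max.
by rewrite -wt np_weight_setU1D1 // subsetUr.
Qed.

Lemma new_at_pivot_face t s : new_at t s -> ~ stage t (s :\ pivot_set s).
Proof.
case=> tau [tn [wt ->]]; rewrite pivot_set_setU1 (setU1K (np_pivot_notin tn)).
case=> [[_ [/negP[]|allk]]|[tau' [tn' [lt sub]]]]; first exact: np_setT.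
  by move: (allk _ (np_missing_max_in tn)); rewrite (negbTE (k_notin_missing_max k tau)).
have msub : #|missing tau| <= #|missing tau'|.
  by rewrite -(missing_setU1 tau' (k_in_pivot_set k tau')); apply/subset_leq_card/missing_mono.
have csub : #|tau| <= #|tau'|.+1.
  by move/subset_leq_card: sub; rewrite cardsU1 (np_pivot_notin tn').
rewrite -wt in lt; have [l1 l2] := weight_lt lt.
have [e|ne] := eqVneq #|tau'| #|tau|; first by have := l2 e; lia.
have e : tau = pivot_set tau' |: tau'.
  apply/eqP; rewrite eqEcard sub cardsU1 (np_pivot_notin tn'); lia.
by have := np_pivot_notin tn; rewrite {1}e pivot_set_setU1 e setU11.
Qed.

Lemma new_at_meet t s s' : new_at t s -> new_at t s' -> s <> s' -> stage t (s :&: s').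
Proof.
move=> ns ns' ne.
case: (ns) => tau [tn [wt es]]; case: (ns') => tau' [tn' [wt' es']].
have [ec em] : #|tau| = #|tau'| /\ #|missing tau| = #|missing tau'|.
  by apply: weight_eq; rewrite wt wt'.
have ys : pivot_set s = pivot_set tau by rewrite es pivot_set_setU1.
suff [x xs [xs' xp]] : exists2 x, x \in s & x \notin s' /\ x != pivot_set s.
  apply: stage_down (new_at_faces ns xs xp); apply/subsetP => A; rewrite !inE => /andP[As As'].
  by rewrite As andbT; apply: contraNneq xs' => <-.
have /subsetPn[x xs xs'] : ~~ (s \subset s').
  apply/negP => ss; apply: ne; apply/eqP.
  by rewrite eqEcard ss /= es es' !cardsU1 (np_pivot_notin tn) (np_pivot_notin tn') ec.
have [xp|xp] := eqVneq x (pivot_set s); last by exists x.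
have /subsetPn[z zt zs'] : ~~ (tau \subset s').
  apply/negP => ts.
  have ms : missing tau \subset missing tau'.
    by rewrite -(missing_setU1 tau' (k_in_pivot_set k tau')) -es'; apply: missing_mono.
  have me : missing tau = missing tau' by apply/eqP; rewrite eqEcard ms em leqnn.
  by move: xs'; rewrite xp ys (pivot_set_missing me) es' setU11.
exists z; first by rewrite es !inE zt orbT.
by split => //; rewrite ys; apply: contraTneq zt => ->; apply: np_pivot_notin.
Qed.

Lemma stage_step t V : stage t.+1 V -> stage t V \/ exists s, new_at t s /\ V \subset s.
Proof.
case=> [H|[tau [tn [lt sub]]]]; first by left; left.
case: (ltngtP (weight tau) t) => [lt'| |e].
- by left; right; exists tau.
- by move=> gt; move: lt; rewrite ltnS leqNgt gt.
- by right; exists (pivot_set tau |: tau); split => //; exists tau.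
Qed.

Lemma stage_all V : admissible V -> stage (card_bound * card_bound) V.
Proof.
move=> aV; have [cV V0 Vk] := aV.
case: (classic (base V)) => [H|nb]; first by left.
have VT : setT \in V by apply: NNPP => nT; apply: nb; split => //; left; apply/negP.
have m0 : missing V != set0.
  apply/set0Pn; apply: NNPP => nm; apply: nb; split => //; right => A AV.
  by apply: NNPP => kA; apply: nm; exists A; rewrite inE AV /=; apply/negP.
have bV : missing_max V \in V by move: (missing_max_in cV m0); rewrite inE => /andP[].
have wb tau : weight tau < card_bound * card_bound.
  by rewrite /weight; have := card_lt_bound tau; have := card_lt_bound (missing tau); nia.
right; case yV: (pivot_set V \in V); last first.
  by exists V; split; [split; rewrite ?yV | split => //; apply: subsetUr].
exists (V :\ pivot_set V).
have mD : missing (V :\ pivot_set V) = missing V.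
  rewrite missing_setD1; apply/setP => A; rewrite !inE.
  by case: (A =P pivot_set V) => [->|] //=; rewrite k_in_pivot_set andbF.
have yD : pivot_set (V :\ pivot_set V) = pivot_set V by apply: pivot_set_missing.
split; first split.
- exact: admissible_sub (subD1set _ _) aV.
- by rewrite !inE VT andbT eq_sym pivot_set_neq_setT.
- by rewrite mD.
- by rewrite yD !inE eqxx.
by split => //; rewrite yD setD1K.
Qed.

End Filtration.

Section ExtendBase.
Variables (C : sSet) (qC : quasicategory C) (n : nat) (k : 'I_n.+1).
Local Notation SS := {set 'I_n.+1}.
Implicit Types (A B : SS).
Local Notation natural_on := (@natural_on C n).

Lemma extend_stages (G0 : forall q, sd n q -> C q) : natural_on (base k) G0 -> forall t,
  exists G : forall q, sd n q -> C q, natural_on (stage k t) G /\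
     forall q (c : sd n q), base k (sets_of c) -> G q c = G0 q c.
Proof.
move=> nG0; elim=> [|t [Gt [nGt eGt]]].
  by exists G0; split => //; apply: (natural_on_sub nG0) => V [|[tau [_ []]]].
have new_nondeg s : new_at k t s -> nondeg_chain s.
  by case=> tau [tn [_ ->]]; exact: np_nondeg_setU1.
have new_pivot s : new_at k t s -> [/\ pivot_set k s \in s,
    exists2 a, a \in s & a \proper pivot_set k s & exists2 b, b \in s & pivot_set k s \proper b].
  case=> tau [tn [_ ->]]; rewrite pivot_set_setU1; split; first exact: setU11.
  - exists (missing_max k tau); last exact: missing_max_proper_pivot.
    by rewrite !inE (np_missing_max_in tn) orbT.
  - by exists setT; [rewrite !inE (np_setT tn) orbT | exact: np_pivot_proper_setT].
have [G' [nG' eG']] := extend_along_inner_horns qC (@stage_down n k t) nGt new_nondeg new_pivot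
  (@new_at_faces n k t) (@new_at_pivot_face n k t) (@new_at_meet n k t).
exists G'; split; first exact: natural_on_sub nG' (@stage_step n k t).
by move=> q c Sc; rewrite eG' ?eGt //; left.
Qed.

Definition collapse A : SS := if A == compl_k k then setT else A.

Lemma collapse_neq0 A : A != set0 -> collapse A != set0.
Proof. by rewrite /collapse; case: ifP => // _ _; apply: setT_neq0. Qed.

Lemma collapse_neq_compl A : collapse A != compl_k k.
Proof.
rewrite /collapse; case: ifP => [_|/negbT //]; apply/eqP => /setP /(_ k).
by rewrite !inE eqxx.
Qed.

Lemma superset_compl_k B : compl_k k \subset B -> B != compl_k k -> B = setT.
Proof.
move=> kB Bk; have kinB : k \in B.
  apply: contraR Bk => kB'; rewrite eqEsubset kB andbT.
  by apply/subsetP => x xB; rewrite !inE; apply: contraNneq kB' => <-.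
apply/setP => x; rewrite inE; have [->|xk] := eqVneq x k => //.
by apply: (subsetP kB); rewrite !inE.
Qed.

Lemma collapse_mono A B : A \subset B -> collapse A \subset collapse B.
Proof.
rewrite /collapse; have [_|Bk] := eqVneq B (compl_k k); first by rewrite subsetT.
have [-> AB|//] := eqVneq A (compl_k k).
by rewrite (superset_compl_k AB Bk).
Qed.

Definition collapse_sd q (c : sd n q) : sd n q.
Proof.
refine (exist _ (fun i => toNE (collapse (sval (sval c i)))) _).
move=> i j ij; rewrite !toNE_val ?collapse_neq0 //; try exact: (proj2_sig (sval c _)).
exact/collapse_mono/(proj2_sig c).
Defined.

Lemma collapse_sd_nat q q' (f : dmap q' q) (c : sd n q) :
  collapse_sd (sact (sd n) f c) = sact (sd n) f (collapse_sd c).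
Proof. by apply: sig_eqPI. Qed.

Lemma sets_of_collapse_sd q (c : sd n q) : sets_of (collapse_sd c) = collapse @: sets_of c.
Proof.
rewrite /sets_of -imset_comp; apply: eq_imset => i /=.
by rewrite toNE_val // collapse_neq0 //; exact: (proj2_sig (sval c i)).
Qed.

Lemma admissible_collapse_sd q (c : sd n q) : admissible k (sets_of (collapse_sd c)).
Proof.
split; [exact: sets_of_chain | exact: set0_notin_sets_of |].
rewrite sets_of_collapse_sd; apply/imsetP => -[A _ /eqP].
by rewrite eq_sym (negbTE (collapse_neq_compl A)).
Qed.

Lemma collapse_sd_id q (c : sd n q) : compl_k k \notin sets_of c -> collapse_sd c = c.
Proof.
move=> ck; apply: sig_eqPI; apply: functional_extensionality => i /=.
have ne : sval (sval c i) != compl_k k by apply: contraNneq ck => <-; apply: imset_f.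
by apply: sig_eqPI; rewrite /collapse (negbTE ne) toNE_val //; exact: (proj2_sig (sval c i)).
Qed.

(* Every admissible chain lies in the last stage, and collapse_sd makes every chain admissible. *)
Lemma extend_base (G0 : forall q, sd n q -> C q) : natural_on (base k) G0 ->
  exists G : sMap (sd n) C, forall q (c : sd n q), base k (sets_of c) -> G q c = G0 q c.
Proof.
move=> nG0; have [G [nG eG]] := extend_stages nG0 (card_bound n * card_bound n).
have nGc m p (f : dmap m p) (c : sd n p) :
    G m (collapse_sd (sact (sd n) f c)) = sact C f (G p (collapse_sd c)).
  by rewrite collapse_sd_nat nG //; exact/stage_all/admissible_collapse_sd.
exists (@SMap (sd n) C (fun q c => G q (collapse_sd c)) nGc) => q c bc /=.
by have [[_ _ ck] _] := bc; rewrite collapse_sd_id // eG.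
Qed.

End ExtendBase.

Definition extends_LJ_to_L (C : sSet) n (k : 'I_n.+1) := forall F : forall q, sd n q -> C q,
  natural_on (in_LJ k) F -> exists K : forall q, sd n q -> C q, natural_on (in_L k) K /\
   forall q (c : sd n q), in_LJ k (sets_of c) -> K q c = F q c.

Section LiftingExtends.
Variables (C : sSet) (n : nat) (k : 'I_n.+1).

Definition L_of_sd q (c : sd n q) : Lnerve k q.
Proof.
refine (exist _ (fun i => exist (fun A : {set 'I_n.+1} => k \in A)
                  (k |: sval (sval c i)) (setU11 _ _)) _).
by move=> i j ij /=; apply/setUS/(proj2_sig c).
Defined.

Lemma L_of_sd_nat q q' (f : dmap q' q) (c : sd n q) :
  L_of_sd (sact (sd n) f c) = sact (Lnerve k) f (L_of_sd c).
Proof. by apply: sig_eqPI. Qed.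

Lemma L_of_sdK q (c : sd n q) : in_L k (sets_of c) -> sd_of_L (L_of_sd c) = c.
Proof.
move=> Lc; apply: sig_eqPI; apply: functional_extensionality => i; apply: sig_eqPI => /=.
by apply/setUidPr; rewrite sub1set; apply/Lc/imset_f.
Qed.

Lemma in_LJ_sd_of_L q (x : LJ k q) : in_LJ k (sets_of (sd_of_L (sval x))).
Proof.
split; last by move=> A /imsetP[i _ ->]; exact: (proj2_sig (sval (sval x) i)).
apply/imsetP => -[i _ e]; move: (proj2_sig x i).
by rewrite /LJP /= -[sval (sval (sval x) i)]/(sval (sval (sd_of_L (sval x)) i)) -e eqxx.
Qed.

Lemma lifting_extends_LJ_to_L :
  (forall g : msMap (LJ k) (sharp C), exists h : msMap (L k) (sharp C),
    forall p (y : LJ k p), h p (sval y) = g p y) ->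
  extends_LJ_to_L C k.
Proof.
move=> hC F nF.
pose g := @SMap (LJ k) C (fun q x => F q (sd_of_L (sval x)))
   (fun m p f x => etrans (f_equal (F m) (sd_of_L_nat f (sval x))) (nF p m f _ (in_LJ_sd_of_L x))).
have [h Hh] := hC (@MSMap (LJ k) (sharp C) g (fun _ _ => I)).
exists (fun q c => h q (L_of_sd c)); split.
  by move=> q q' f c _; rewrite L_of_sd_nat snat.
move=> q c [cT Lc].
have LJc : LJP (L_of_sd c).
  move=> i /=; rewrite (setUidPr _); last by rewrite sub1set; apply/Lc/imset_f.
  by apply: contraNneq cT => <-; apply: imset_f.
have -> : L_of_sd c = sval (exist _ _ LJc : LJ k q) by [].
by rewrite Hh /= L_of_sdK.
Qed.

End LiftingExtends.

Section PermSd.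
Variables (n : nat) (s : {perm 'I_n.+1}).

Definition perm_sd q (c : sd n q) : sd n q.
Proof.
refine (exist _ (fun i => exist (fun B : {set 'I_n.+1} => B != set0) (s @: sval (sval c i))
                            (eq_ind_r (fun b => ~~ b) (proj2_sig (sval c i)) (imset_eq0 s _))) _).
by move=> i j ij /=; apply/imsetS/(proj2_sig c).
Defined.

Lemma perm_sd_nat q q' (f : dmap q' q) (c : sd n q) :
  perm_sd (sact (sd n) f c) = sact (sd n) f (perm_sd c).
Proof. by apply: sig_eqPI. Qed.

Lemma sets_of_perm_sd q (c : sd n q) :
  sets_of (perm_sd c) = [set s @: A | A : {set 'I_n.+1} in sets_of c].
Proof. by rewrite /sets_of -imset_comp. Qed.

Lemma imset_perm_setT : s @: [set: 'I_n.+1] = setT.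
Proof. by apply/setP => x; rewrite inE -(permKV s x) mem_imset ?inE //; exact: perm_inj. Qed.

Lemma in_L_perm_sd a q (c : sd n q) : in_L a (sets_of c) -> in_L (s a) (sets_of (perm_sd c)).
Proof.
move=> La A; rewrite sets_of_perm_sd => /imsetP[B BV ->].
by rewrite mem_imset; [exact: La | exact: perm_inj].
Qed.

Lemma in_LJ_perm_sd a q (c : sd n q) : in_LJ a (sets_of c) -> in_LJ (s a) (sets_of (perm_sd c)).
Proof.
case=> cT La; split; last exact: in_L_perm_sd.
rewrite sets_of_perm_sd; apply/imsetP => -[B Bc /esym eB].
suff BT : B = setT by move: cT; rewrite -BT Bc.
by apply: (imset_inj (@perm_inj _ s)) => /=; rewrite eB imset_perm_setT.
Qed.

End PermSd.

Lemma perm_sdK n (s : {perm 'I_n.+1}) q (c : sd n q) : perm_sd s^-1 (perm_sd s c) = c.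
Proof.
apply: sig_eqPI; apply: functional_extensionality => i; apply: sig_eqPI => /=.
by rewrite -imset_comp -[RHS]imset_id; apply: eq_imset => x; rewrite /= permK.
Qed.

Lemma extends_LJ_to_L_perm (C : sSet) n (s : {perm 'I_n.+1}) (a : 'I_n.+1) :
  extends_LJ_to_L C (s a) -> extends_LJ_to_L C a.
Proof.
move=> Psa F nF.
have nFs : natural_on (in_LJ (s a)) (fun q c => F q (perm_sd s^-1 c)).
  move=> q q' f c LJc /=; rewrite perm_sd_nat nF //.
  by rewrite -[a](permK s); apply: in_LJ_perm_sd.
have [K [nK eK]] := Psa _ nFs.
exists (fun q c => K q (perm_sd s c)); split.
  by move=> q q' f c Lc /=; rewrite perm_sd_nat nK //; apply: in_L_perm_sd.
by move=> q c LJc /=; rewrite eK ?perm_sdK //; apply: in_LJ_perm_sd.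
Qed.

Section DimOne.
Variables (C : sSet) (n : nat) (n0 : 0 < n) (n1 : n <= 1) (k : 'I_n.+1).

Lemma eq_set1_dim1 (A : {set 'I_n.+1}) : k \in A -> A != setT -> A = [set k].
Proof.
move=> kA AT; apply/setP => x; rewrite inE.
have [->|xk] := eqVneq x k; first by rewrite kA.
apply/negbTE/negP => xA; apply: (negP AT); apply/eqP/setP => y; rewrite inE.
have xk' : (x : nat) <> k by move=> e; move/eqP: xk; apply; apply: val_inj.
have : (y : nat) = k \/ (y : nat) = x.
  by have := ltn_ord y; have := ltn_ord k; have := ltn_ord x; lia.
by case=> e; rewrite (val_inj e).
Qed.

Lemma set1_neq_setT : [set k] != setT.
Proof. by apply/eqP => e; have := cards1 k; rewrite e cardsT card_ord; lia. Qed.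

Definition const_sd q : sd n q :=
  exist (fun c : 'I_q.+1 -> NE n => forall i j : 'I_q.+1, i <= j -> sval (c i) \subset sval (c j))
    (fun _ => toNE [set k]) (fun _ _ _ => subxx _).

Lemma toNE_set1 : sval (toNE [set k]) = [set k].
Proof. by rewrite toNE_val //; apply/set0Pn; exists k; rewrite inE. Qed.

Lemma in_LJ_const_sd q : in_LJ k (sets_of (const_sd q)).
Proof.
have e A : A \in sets_of (const_sd q) -> A = [set k] by move=> /imsetP[i _ ->]; exact: toNE_set1.
split; last by move=> A /e ->; rewrite inE.
by apply/negP => /e /esym /eqP; rewrite (negbTE set1_neq_setT).
Qed.

(* For n = 1 the only simplices of LJ^1_k are the degeneracies of the vertex {k}. *)
Lemma extends_LJ_to_L_dim1 : extends_LJ_to_L C k.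
Proof.
move=> F nF; exists (fun q c => F q (const_sd q)); split.
  move=> q q' f c _ /=; rewrite -nF; last exact: in_LJ_const_sd.
  by congr (F q' _); apply: sig_eqPI.
move=> q c [cT Lc] /=; congr (F q _).
apply: sig_eqPI; apply: functional_extensionality => i /=; apply: sig_eqPI.
rewrite toNE_set1; apply/esym/eq_set1_dim1; first exact/Lc/imset_f.
by apply: contraNneq cT => <-; apply: imset_f.
Qed.

End DimOne.

Lemma extends_LJ_to_L_of_CLF (C : sSet) n (k : 'I_n.+1) :
  CLF (sharp C) -> 0 < n -> extends_LJ_to_L C k.
Proof.
move=> [_ hC] n0; have [n1|n2] := leqP n 1; first exact: extends_LJ_to_L_dim1.
pose k1 : 'I_n.+1 := inord 1.
have k1_gt0 : 0 < k1 by rewrite /k1 inordK //; lia.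
apply: (@extends_LJ_to_L_perm _ _ (tperm k k1)); rewrite tpermL.
exact/lifting_extends_LJ_to_L/(hC n k1 n2 k1_gt0).
Qed.

(** * CLF gives horn fillers in [Ex C] *)

Lemma exists_notin_k n (k : 'I_n.+1) (E : {set 'I_n.+1}) :
  E != setT -> E != compl_k k -> exists j, j \notin E /\ j != k.
Proof.
move=> ET Ek; have [j jE] := exists_notin ET.
have [jk|] := eqVneq j k; last by exists j.
subst j; apply: NNPP => nj; apply: (negP Ek); rewrite eqEsubset; apply/andP; split.
  by apply/subsetP => x xE; rewrite !inE; apply: contraNneq jE => <-.
apply/subsetP => x; rewrite !inE => xk; apply: NNPP => xE.
by apply: nj; exists x; split => //; exact/negP.
Qed.

Definition Ex_of_sd_map (C : sSet) n (G : sMap (sd n) C) : sMap (Delta n) (Ex C).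
Proof.
refine (@SMap (Delta n) (Ex C) (fun p c => sMap_comp G (sd_map (dmap_of c))) _).
move=> m p f c; apply: sMap_eq => q B /=; congr (G q _).
apply: sig_eqPI; apply: functional_extensionality => i; apply: sig_eqPI => /=.
by rewrite -imset_comp.
Defined.

Section HornInEx.
Variables (C : sSet) (n : nat) (n0 : 0 < n) (k : 'I_n.+1) (g : sMap (horn k) (Ex C)).
Local Notation SS := {set 'I_n.+1}.
Implicit Types (E : SS).

Definition vertex_off_k : 'I_n.+1 := if k == ord0 then inord 1 else ord0.

Lemma vertex_off_k_neq : vertex_off_k != k.
Proof.
rewrite /vertex_off_k; have [->|kn] := eqVneq k ord0; last by rewrite eq_sym.
by apply/eqP => /(congr1 val); rewrite /= inordK //; lia.
Qed.

Lemma hornP_retraction_k : hornP k (delta_of (retraction [set k])).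
Proof.
apply: (hornP_retraction (j := vertex_off_k)); last exact: vertex_off_k_neq.
- by apply/set0Pn; exists k; rewrite inE.
- by rewrite inE vertex_off_k_neq.
Qed.

(* Junk value (the retraction onto {k}) when the retraction onto E is not in the horn. *)
Definition horn_retraction E : horn k n :=
  match excluded_middle_informative (hornP k (delta_of (retraction E))) with
  | left H => exist _ _ H
  | right _ => exist _ _ hornP_retraction_k
  end.

Lemma horn_retractionE E : E != set0 -> (exists j, j \notin E /\ j != k) ->
  sval (horn_retraction E) = delta_of (retraction E).
Proof.
move=> E0 [j [jE jk]]; rewrite /horn_retraction; case: excluded_middle_informative => // nh.
by case: nh; apply: hornP_retraction E0 jE jk.
Qed.

Definition horn_on_sd q (c : sd n q) : C q := g n (horn_retraction (top_set c)) q c.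

Lemma sets_of_horn_sd p (y : horn k p) q (B : sd p q) :
  exists j, j != k /\ forall A, A \in sets_of (sd_fun (dmap_of (sval y)) B) -> j \notin A.
Proof.
have [j [jk Hj]] := proj2_sig y; exists j; split => // A /imsetP[i _ ->] /=.
by apply/imsetP => -[x _ /eqP]; rewrite eq_sym (negbTE (Hj x)).
Qed.

Lemma horn_on_sdE p (y : horn k p) q (B : sd p q) :
  g p y q B = horn_on_sd (sd_fun (dmap_of (sval y)) B).
Proof.
set c := dmap_of (sval y); set T := top_set B; set E := c @: T.
have E0 : E != set0 by rewrite imset_eq0; exact: (proj2_sig (sval B ord_max)).
have hE : exists j, j \notin E /\ j != k.
  have [j [jk Hj]] := sets_of_horn_sd y B; exists j; split => //.
  exact/Hj/top_set_in.
have eB : sd_fun (retraction T) B = B by exact: sd_fun_retraction.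
have ey : sact (horn k) (retraction T) y =
          sact (horn k) (dcomp c (retraction T)) (horn_retraction E).
  apply: sig_eqPI; apply: sig_eqPI; apply: functional_extensionality => i.
  rewrite /= horn_retractionE //= [retr E _]retr_id //.
  by apply/imsetP; exists (retr T i) => //; exact/retr_in/(proj2_sig (sval B ord_max)).
(* naturality of g along the retraction onto T, which fixes B *)
by rewrite -{1}eB -[_ (sd_fun _ B)]/(sact (Ex C) _ _ q B) -snat ey snat /= sd_fun_comp eB.
Qed.

Lemma horn_on_sd_natural :
  natural_on (fun V => setT \notin V /\ compl_k k \notin V) horn_on_sd.
Proof.
move=> q q' f c [cT ck]; set E := top_set c.
have E0 : E != set0 := proj2_sig (sval c ord_max).
have hE : exists j, j \notin E /\ j != k.
  by apply: exists_notin_k; [apply: contraNneq cT | apply: contraNneq ck] => <-; apply: top_set_in.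
rewrite [in RHS]/horn_on_sd -/E -(snat (g n (horn_retraction E))) horn_on_sdE.
congr (horn_on_sd _); rewrite horn_retractionE //.
apply: sig_eqPI; apply: functional_extensionality => i; apply: sig_eqPI => /=.
by apply/esym/retr_imset/sub_top_set.
Qed.

End HornInEx.

Lemma glue_natural (C : sSet) n (k : 'I_n.+1) (F K : forall q, sd n q -> C q) :
  natural_on (fun V => setT \notin V /\ compl_k k \notin V) F -> natural_on (in_L k) K ->
  (forall q (c : sd n q), in_LJ k (sets_of c) -> K q c = F q c) ->
  natural_on (base k) (fun q c => if setT \in sets_of c then K q c else F q c).
Proof.
move=> nF nK eK q q' f c [[_ _ ck] H] /=; have fc := sets_of_sact f c.
have [cT|cT] := boolP (setT \in sets_of c); last first.
  by rewrite ifF; [apply: nF | apply/negP => /(subsetP fc); apply/negP].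
have Lc : in_L k (sets_of c) by case: H => // /negP.
have Lfc : in_L k (sets_of (sact (sd n) f c)) by move=> A /(subsetP fc); apply: Lc.
case: ifP => fcT; first exact: nK.
by rewrite -eK; [apply: nK | split => //; apply/negbT].
Qed.

Theorem Kan_Ex_of_CLF (C : sSet) : quasicategory C -> CLF (sharp C) -> Kan_complex (Ex C).
Proof.
move=> qC hC n k n0 g.
have nF := horn_on_sd_natural n0 g.
have nF' : natural_on (in_LJ k) (horn_on_sd n0 g).
  apply: (natural_on_sub nF) => V [VT Lk]; split => //.
  by apply/negP => /Lk; rewrite !inE eqxx.
have [K [nK eK]] := extends_LJ_to_L_of_CLF hC n0 nF'.
have [G eG] := extend_base qC (glue_natural nF nK eK).
exists (Ex_of_sd_map G) => p y; apply: sMap_eq => q B /=.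
have [j [jk Hj]] := sets_of_horn_sd y B.
have cT : setT \notin sets_of (sd_fun (dmap_of (sval y)) B) by apply/negP => /Hj; rewrite inE.
rewrite (horn_on_sdE n0 g y B) eG ?(negbTE cT) //; split; last by left.
split; [exact: sets_of_chain | exact: set0_notin_sets_of |].
by apply/negP => /Hj; rewrite !inE jk.
Qed.

Lemma weakly_closed_comp_sharp (C : sSet) : quasicategory C -> weakly_closed_comp (sharp C).
Proof. by move=> qC g _; have [h Hh] := qC 2 (@Ordinal 3 1 erefl) isT isT g; exists h. Qed.

Theorem corollary9p7 (C : sSet) :
  quasicategory C -> (Kan_complex (Ex C) <-> CLF (sharp C)).
Proof.
move=> qC; split => [KC|]; last exact: Kan_Ex_of_CLF.
split; first exact: weakly_closed_comp_sharp.
by move=> n k n2 _; apply: Kan_Ex_LJ_extension => //; exact: leq_trans n2.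
Qed.
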